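(* Let $m\ge1$, $\boldsymbol\gamma=(\gamma_1,\ldots,\gamma_m)\in\mathbb{N}^m$, and let $f_1,\ldots,f_{m+1}$ be multiplicative arithmetic functions. Then the function $S^{\boldsymbol\gamma}_{f_1,\ldots,f_{m+1}}$ of $m+1$ variables is multiplicative.
   Context: An arithmetic function is a map $f:\mathbb{N}\to\mathbb{C}$, with $f(x)=0$ for $x\notin\mathbb{N}$. It is multiplicative if $f(ab)=f(a)f(b)$ whenever $\gcd(a,b)=1$. The multiple Ramanujan sum is \[ S^{\boldsymbol\gamma}_{f_1,\ldots,f_{m+1}}(n_1,\ldots,n_{m+1}):=\sum_{\substack{(d_1,\ldots,d_m)\in\mathbb{N}^m\\ d_j^{\gamma_j}\mid\gcd(n_1,\ldots,n_{j+1})\ (1\le j\le m)}} f_1\Bigl(\frac{n_1}{d_1^{\gamma_1}}\Bigr)f_2\Bigl(\frac{d_1^{\gamma_1}}{d_2^{\gamma_2}}\Bigr)\cdots f_m\Bigl(\frac{d_{m-1}^{\gamma_{m-1}}}{d_m^{\gamma_m}}\Bigr)f_{m+1}\bigl(d_m^{\gamma_m}\bigr). \] A function $F:\mathbb{N}^k\to\mathbb{C}$ is called multiplicative if $F(m_1n_1,\ldots,m_kn_k)=F(m_1,\ldots,m_k)F(n_1,\ldots,n_k)$ for all $(m_1,\ldots,m_k),(n_1,\ldots,n_k)\in\mathbb{N}^k$ that are relatively prime, i.e. $\gcd(m_1\cdots m_k,\,n_1\cdots n_k)=1$. *)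

From mathcomp Require Import all_boot all_algebra.
From mathcomp Require Import complex reals.
Set Implicit Arguments. Unset Strict Implicit. Unset Printing Implicit Defensive.
Import GRing.Theory.
Local Open Scope ring_scope.

Definition multiplicative_fun (C : ringType) (f : nat -> C) : Prop :=
  forall a b : nat, (0 < a)%N -> (0 < b)%N -> coprime a b -> f (a * b)%N = f a * f b.

(* f evaluated at a / b, with the convention f(x) = 0 for x not in N *)
Definition fquot (C : ringType) (f : nat -> C) (a b : nat) : C :=
  if [&& (0 < a)%N, (0 < b)%N & (b %| a)%N] then f (a %/ b)%N else 0.

(* multiple Ramanujan sum S^gamma_{f_1..f_{m+1}}(n_1..n_{m+1}), 0-indexed:
   f k = f_{k+1}, n i = n_{i+1}, gam j = gamma_{j+1}, d j = d_{j+1}.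
   Since d_j <= d_j^{gamma_j} <= n_1 (for positive arguments), the
   range d_j in {0..n_1} is exhaustive. *)
Definition mramanujan (C : ringType) (m : nat) (gam : 'I_m -> nat)
  (f : 'I_m.+1 -> nat -> C) (n : 'I_m.+1 -> nat) : C :=
  \sum_(d : {ffun 'I_m -> 'I_(n ord0).+1} |
          [forall j : 'I_m, (0 < d j)%N &&
             ((d j : nat) ^ gam j %| \big[gcdn/0%N]_(i < m.+1 | (i <= j.+1)%N) n i)%N])
    let ds := [seq ((d j : nat) ^ gam j)%N | j <- enum 'I_m] in
    let D := fun k : nat => if k == 0%N then n ord0 else nth 1%N ds k.-1 in
    \prod_(k < m.+1) fquot (f k) (D k) (D k.+1).

Definition multiplicative_k (C : ringType) (k : nat) (F : ('I_k -> nat) -> C) : Prop :=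
  forall a b : 'I_k -> nat,
    (forall i, 0 < a i)%N -> (forall i, 0 < b i)%N ->
    coprime (\prod_(i < k) a i) (\prod_(i < k) b i) ->
    F (fun i => (a i * b i)%N) = F a * F b.

From mathcomp Require Import all_boot all_algebra.
From mathcomp Require Import complex reals.
Set Implicit Arguments. Unset Strict Implicit. Unset Printing Implicit Defensive.
Import GRing.Theory.
Local Open Scope ring_scope.

(* For coprime tuples a and b, every admissible tuple d for ab factors uniquely
   as d_j = gcd(d_j, a_1) * gcd(d_j, b_1), which is a bijection onto pairs of
   admissible tuples for a and for b.  The divisor chains of the two factors
   divide a_1 and b_1 respectively, so they are coprime and multiplicativity
   of each f_k splits every summand into the product of the two summands. *)

Lemma dvdn_mul_coprime (x y A B : nat) :
  coprime x B -> coprime y A -> (x * y %| A * B)%N = (x %| A)%N && (y %| B)%N.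
Proof.
move=> cxB cyA; apply/idP/andP => [xyAB | [xA yB]]; last exact: dvdn_mul.
split; first by rewrite -(Gauss_dvdl A cxB) (dvdn_trans (dvdn_mulr y (dvdnn x))).
by rewrite -(Gauss_dvdr B cyA) (dvdn_trans (dvdn_mull x (dvdnn y))).
Qed.

Lemma dvdn_biggcdM (I : finType) (P : pred I) (a b : I -> nat) (X Y : nat) :
  (forall i, coprime X (b i)) -> (forall i, coprime Y (a i)) ->
  (X * Y %| \big[gcdn/0%N]_(i | P i) (a i * b i))%N =
  (X %| \big[gcdn/0%N]_(i | P i) a i)%N && (Y %| \big[gcdn/0%N]_(i | P i) b i)%N.
Proof.
move=> cXb cYa; apply/dvdn_biggcdP/andP => [XYab | [/dvdn_biggcdP Xa /dvdn_biggcdP Yb]].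
  split; apply/dvdn_biggcdP => i Pi;
    by have := XYab i Pi; rewrite dvdn_mul_coprime // => /andP[].
by move=> i Pi; rewrite dvdn_mul ?Xa ?Yb.
Qed.

Lemma gcdn_mul_dvdl (x y A B : nat) :
  (x %| A)%N -> (y %| B)%N -> coprime A B -> gcdn (x * y) A = x.
Proof.
move=> xA yB cAB.
by rewrite gcdnC Gauss_gcdl ?(coprime_dvdr yB cAB) //; apply/gcdn_idPr.
Qed.

Lemma gcdn_coprime_split (d A B : nat) :
  coprime A B -> (d %| A * B)%N -> (gcdn d A * gcdn d B)%N = d.
Proof.
move=> cAB dAB; apply/eqP; rewrite eqn_dvd; apply/andP; split.
  rewrite Gauss_dvd ?dvdn_gcdl //.
  exact: coprime_dvdl (dvdn_gcdr _ _) (coprime_dvdr (dvdn_gcdr _ _) cAB).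
have dAgB : (d %| gcdn d A * B)%N by rewrite muln_gcdl dvdn_gcd dvdn_mulr.
have := dvdn_gcd d (gcdn d A * B) (gcdn d A * d).
by rewrite dAgB dvdn_mull // -muln_gcdr (gcdnC B d).
Qed.

Lemma coprime_prod_entries (k : nat) (a b : 'I_k -> nat) i j :
  coprime (\prod_(i < k) a i) (\prod_(i < k) b i) -> coprime (a i) (b j).
Proof.
move=> cab; apply: coprime_dvdl (coprime_dvdr _ cab).
  by rewrite (bigD1 i) //= dvdn_mulr.
by rewrite (bigD1 j) //= dvdn_mulr.
Qed.

(* No positivity is needed: fquot vanishes as soon as an argument is 0. *)
Lemma fquotM (C : nzRingType) (f : nat -> C) (u1 v1 u2 v2 : nat) :
  multiplicative_fun f -> coprime (u1 * v1) (u2 * v2) ->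
  fquot f (u1 * u2) (v1 * v2) = fquot f u1 v1 * fquot f u2 v2.
Proof.
move=> fM c12; move: (c12); rewrite coprimeMl !coprimeMr.
case/andP=> /andP[_ cu1v2] /andP[cv1u2 _].
rewrite /fquot dvdn_mul_coprime 1?(coprime_sym v2) //.
have [/dvdnP[q1 u1E]|_] := boolP (v1 %| u1)%N; last by rewrite !andbF mul0r.
have [/dvdnP[q2 u2E]|_] := boolP (v2 %| u2)%N; last by rewrite !andbF mulr0.
subst u1 u2; rewrite !muln_gt0 !andbT.
have [->|q1_gt0] := posnP q1; first by rewrite mul0r.
have [->|v1_gt0] := posnP v1; first by rewrite !andbF mul0r.
have [->|q2_gt0] := posnP q2; first by rewrite !andbF mulr0.
have [->|v2_gt0] := posnP v2; first by rewrite !andbF mulr0.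
rewrite /= mulnACA !mulnK ?muln_gt0 ?v1_gt0 //.
apply: fM => //; apply: coprime_dvdl (dvdn_mulr _ (dvdn_mulr _ (dvdnn q1))) _.
exact: coprime_dvdr (dvdn_mulr _ (dvdn_mulr _ (dvdnn q2))) c12.
Qed.

Section MultipleRamanujanSum.

Variables (m : nat) (gam : 'I_m -> nat).

Definition admissible (n : 'I_m.+1 -> nat) (e : 'I_m -> nat) : bool :=
  [forall j : 'I_m, (0 < e j)%N &&
     (e j ^ gam j %| \big[gcdn/0%N]_(i < m.+1 | (i <= j.+1)%N) n i)%N].

Definition dchain (n0 : nat) (e : 'I_m -> nat) (k : nat) : nat :=
  if k == 0%N then n0 else nth 1%N [seq (e j ^ gam j)%N | j <- enum 'I_m] k.-1.

Definition chain_term (C : nzRingType) (f : 'I_m.+1 -> nat -> C)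
    (n0 : nat) (e : 'I_m -> nat) : C :=
  \prod_(k < m.+1) fquot (f k) (dchain n0 e k) (dchain n0 e k.+1).

Lemma mramanujanE (C : nzRingType) (f : 'I_m.+1 -> nat -> C) (n : 'I_m.+1 -> nat) :
  mramanujan gam f n =
  \sum_(d : {ffun 'I_m -> 'I_(n ord0).+1} | admissible n (fun j => d j))
    chain_term f (n ord0) (fun j => d j).
Proof. by []. Qed.

Lemma eq_admissible n e1 e2 : e1 =1 e2 -> admissible n e1 = admissible n e2.
Proof. by move=> e12; apply: eq_forallb => j; rewrite e12. Qed.

Lemma eq_chain_term C f n0 e1 e2 :
  e1 =1 e2 -> @chain_term C f n0 e1 = chain_term f n0 e2.
Proof.
move=> e12; rewrite /chain_term /dchain.
by rewrite (eq_map (g := fun j => e2 j ^ gam j)%N) // => j; rewrite e12.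
Qed.

Lemma admissible_dvdX n e j : admissible n e -> (e j ^ gam j %| n ord0)%N.
Proof. by move=> /forallP/(_ j)/andP[_ /dvdn_biggcdP/(_ ord0 isT)]. Qed.

Lemma dchainS n0 e k :
  dchain n0 e k.+1 = oapp (fun j => e j ^ gam j)%N 1%N (insub k).
Proof.
rewrite /dchain /=; case: insubP => [/= j _ <- | ]; last first.
  by rewrite -leqNgt => km; rewrite nth_default // size_map size_enum_ord.
by rewrite (nth_map j) ?size_enum_ord // nth_ord_enum.
Qed.

Lemma dchain_dvd n0 e k :
  (forall j, e j ^ gam j %| n0)%N -> (dchain n0 e k %| n0)%N.
Proof. by case: k => [|k] // eX; rewrite dchainS; case: insub => /=. Qed.

Lemma dchainM A B x y k :
  dchain (A * B) (fun j => x j * y j)%N k = (dchain A x k * dchain B y k)%N.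
Proof. by case: k => [|k] //; rewrite !dchainS; case: insub => //= j; rewrite expnMn. Qed.

Lemma chain_termM (C : comNzRingType) (f : 'I_m.+1 -> nat -> C) A B x y :
  (forall k, multiplicative_fun (f k)) -> coprime A B ->
  (forall j, x j ^ gam j %| A)%N -> (forall j, y j ^ gam j %| B)%N ->
  chain_term f (A * B) (fun j => x j * y j)%N = chain_term f A x * chain_term f B y.
Proof.
move=> fM cAB xA yB; rewrite /chain_term -big_split; apply: eq_bigr => k _.
rewrite !dchainM fquotM //.
apply: coprime_dvdl (dvdn_mul (dchain_dvd k xA) (dchain_dvd k.+1 xA)) _.
apply: coprime_dvdr (dvdn_mul (dchain_dvd k yB) (dchain_dvd k.+1 yB)) _.
by rewrite coprimeMl !coprimeMr cAB.
Qed.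

Lemma admissibleM (a b : 'I_m.+1 -> nat) x y :
  (forall i j, coprime (a i) (b j)) ->
  (forall j, x j %| a ord0)%N -> (forall j, y j %| b ord0)%N ->
  admissible (fun i => a i * b i)%N (fun j => x j * y j)%N =
  admissible a x && admissible b y.
Proof.
move=> cab xa yb.
have cxb j i : coprime (x j ^ gam j) (b i) by rewrite coprimeXl // (coprime_dvdl (xa j)).
have cya j i : coprime (y j ^ gam j) (a i).
  by rewrite coprimeXl // (coprime_dvdl (yb j)) // coprime_sym.
apply/forallP/andP => [xy_adm | [/forallP x_adm /forallP y_adm] j].
  split; apply/forallP => j; move: (xy_adm j);
    by rewrite muln_gt0 expnMn dvdn_biggcdM // andbACA => /andP[].
by rewrite muln_gt0 expnMn dvdn_biggcdM // andbACA x_adm y_adm.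
Qed.

Hypothesis gam_gt0 : forall j, (0 < gam j)%N.

Lemma admissible_dvd n e j : admissible n e -> (e j %| n ord0)%N.
Proof. by move/(admissible_dvdX j); apply: dvdn_trans; apply: dvdn_exp. Qed.

Section CoprimeSplit.

Variables a b : 'I_m.+1 -> nat.
Hypotheses (a0_gt0 : (0 < a ord0)%N) (b0_gt0 : (0 < b ord0)%N).
Hypothesis coprime_ab : forall i j, coprime (a i) (b j).

Local Notation Ia := {ffun 'I_m -> 'I_(a ord0).+1}.
Local Notation Ib := {ffun 'I_m -> 'I_(b ord0).+1}.
Local Notation Iab := {ffun 'I_m -> 'I_(a ord0 * b ord0).+1}.

Definition mul_index (p : Ia * Ib) : Iab := [ffun j => inord (p.1 j * p.2 j)].

Definition split_index (d : Iab) : Ia * Ib :=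
  ([ffun j => inord (gcdn (d j) (a ord0))], [ffun j => inord (gcdn (d j) (b ord0))]).

Lemma mul_indexE p j : mul_index p j = (p.1 j * p.2 j)%N :> nat.
Proof. by rewrite ffunE inordK // ltnS leq_mul // -ltnS. Qed.

Lemma split_index1E d j : (split_index d).1 j = gcdn (d j) (a ord0) :> nat.
Proof. by rewrite ffunE inordK // ltnS dvdn_leq ?dvdn_gcdr. Qed.

Lemma split_index2E d j : (split_index d).2 j = gcdn (d j) (b ord0) :> nat.
Proof. by rewrite ffunE inordK // ltnS dvdn_leq ?dvdn_gcdr. Qed.

Lemma split_mul_index (p : Ia * Ib) :
  (forall j, p.1 j %| a ord0)%N -> (forall j, p.2 j %| b ord0)%N ->
  split_index (mul_index p) = p.
Proof.
case: p => x y /= xa yb; rewrite [split_index _]surjective_pairing.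
congr pair; apply/ffunP => j; apply: val_inj => /=.
  by rewrite split_index1E mul_indexE (gcdn_mul_dvdl (xa j) (yb j)).
by rewrite split_index2E mul_indexE mulnC (gcdn_mul_dvdl (yb j) (xa j)) // coprime_sym.
Qed.

Lemma mul_split_index (d : Iab) :
  admissible (fun i => a i * b i)%N (fun j => d j) -> mul_index (split_index d) = d.
Proof.
move=> d_adm; apply/ffunP => j; apply: val_inj => /=.
rewrite mul_indexE split_index1E split_index2E.
by rewrite gcdn_coprime_split ?(admissible_dvd j d_adm).
Qed.

Lemma admissible_mul_index (p : Ia * Ib) :
  admissible (fun i => a i * b i)%N (fun j => mul_index p j) &&
    (split_index (mul_index p) == p) =
  admissible a (fun j => p.1 j) && admissible b (fun j => p.2 j).
Proof.
rewrite (eq_admissible _ (mul_indexE p)).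
apply/andP/andP => [[adm /eqP splitK] | [xa yb]].
  have xa j : (p.1 j %| a ord0)%N by rewrite -splitK split_index1E dvdn_gcdr.
  have yb j : (p.2 j %| b ord0)%N by rewrite -splitK split_index2E dvdn_gcdr.
  by apply/andP; rewrite -admissibleM.
have xa' j : (p.1 j %| a ord0)%N := admissible_dvd j xa.
have yb' j : (p.2 j %| b ord0)%N := admissible_dvd j yb.
by rewrite admissibleM // xa yb split_mul_index.
Qed.

Lemma mramanujanM (C : comNzRingType) (f : 'I_m.+1 -> nat -> C) :
  (forall k, multiplicative_fun (f k)) ->
  mramanujan gam f (fun i => a i * b i)%N = mramanujan gam f a * mramanujan gam f b.
Proof.
move=> fM; rewrite !mramanujanE big_distrlr pair_big_dep /=.
rewrite (reindex_onto mul_index split_index) => [|d]; last exact: mul_split_index.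
apply: eq_big => [p|p]; first exact: admissible_mul_index.
rewrite admissible_mul_index => /andP[xa yb].
rewrite (eq_chain_term _ _ (mul_indexE p)) chain_termM // => j.
  exact: admissible_dvdX xa.
exact: admissible_dvdX yb.
Qed.

End CoprimeSplit.

End MultipleRamanujanSum.

Theorem proposition2p6 (R : realType) (m : nat) (gam : 'I_m -> nat)
  (f : 'I_m.+1 -> nat -> R[i]) :
  (1 <= m)%N ->
  (forall j, 0 < gam j)%N ->
  (forall k, multiplicative_fun (f k)) ->
  multiplicative_k (mramanujan gam f).
Proof.
move=> _ gam_gt0 fM a b a_gt0 b_gt0 cab.
by apply: mramanujanM => // i j; apply: coprime_prod_entries.
Qed.
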